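(* Let $n\ge2$ and $0\le k<n$. The number of ASM-recurrent configurations $c$ on the fan graph $F_n$ with $\mathrm{level}(c)=k$ is $$\sum_{r=0}^{n-k-1}\binom{n-k-1}{r}\binom{r+k}{r}.$$
   Context: $F_n$: path on $[n]$ (edges $\{i,i+1\}$) plus a sink $0$ adjacent to all of $[n]$. Sandpile setting: configurations $c\in\mathbb{Z}_{\ge0}^n$, stable iff $c_i<\deg(i)$ (on $F_n$: $c\in\{0,1,2\}^n$, $c_1,c_n\le1$). ASM: an unstable vertex loses $\deg(i)$ grains and sends one to each neighbour (grains to the sink vanish); Markov chain adds a grain at a random vertex (fully supported distribution) and stabilises; ASM-recurrent = recurrent state. Known: stable $c$ on $F_n$ is ASM-recurrent iff for all $i<j$ with $c_i=c_j=0$ some $i<k<j$ has $c_k=2$. $\mathrm{level}(c)=\sum_i c_i-(n-1)$. *)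

From Stdlib Require Import Relations.
From mathcomp Require Import all_boot all_order all_algebra.
Set Implicit Arguments. Unset Strict Implicit. Unset Printing Implicit Defensive.

(* Fan graph F_n: non-sink vertices 1..n are encoded as i : 'I_n (vertex i+1);
   path edges {i,i+1}; every non-sink vertex is also adjacent to the sink 0. *)

Definition config (n : nat) := {ffun 'I_n -> nat}.

Definition fan_adj (n : nat) (i j : 'I_n) : bool :=
  (i.+1 == j :> nat) || (j.+1 == i :> nat).

Definition fan_deg (n : nat) (i : 'I_n) : nat :=
  1 + #|[pred j : 'I_n | fan_adj i j]|.

Definition stable (n : nat) (c : config n) : Prop :=
  forall i : 'I_n, c i < fan_deg i.

Definition topple_step (n : nat) (c c' : config n) : Prop :=
  exists i : 'I_n, fan_deg i <= c i /\
    c' = [ffun j => if j == i then c j - fan_deg i else c j + fan_adj i j].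

Definition stabilizes (n : nat) (a b : config n) : Prop :=
  clos_refl_trans (config n) (@topple_step n) a b /\ stable b.

Definition add_grain (n : nat) (c : config n) (i : 'I_n) : config n :=
  [ffun j => c j + (j == i)].

(* support of the ASM Markov chain (distribution fully supported) *)
Definition asm_step (n : nat) (c c' : config n) : Prop :=
  stable c /\ exists i : 'I_n, stabilizes (add_grain c i) c'.

Definition asm_reach (n : nat) := clos_refl_trans (config n) (@asm_step n).

(* recurrent state of the finite Markov chain on stable configurations *)
Definition asm_recurrent (n : nat) (c : config n) : Prop :=
  stable c /\ forall c', asm_reach c c' -> asm_reach c' c.

Definition level (n : nat) (c : config n) : int :=
  ((\sum_(i < n) c i)%:Z - (n.-1)%:Z)%R.

Definition to_config (n : nat) (c : {ffun 'I_n -> 'I_3}) : config n :=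
  [ffun i => nat_of_ord (c i)].

From Stdlib Require Import Relations.
From mathcomp Require Import all_boot all_order all_algebra zify.
Set Implicit Arguments. Unset Strict Implicit. Unset Printing Implicit Defensive.

(* Toppling is terminating and locally confluent, hence abelian; with it one
   shows that a stable configuration is recurrent iff it is reachable from the
   maximal one, iff it contains no forbidden subconfiguration (Dhar's burning
   criterion).  On the fan, where the non-sink vertices form a path, a
   forbidden subconfiguration always contains a run of vertices with zeros at
   both ends and no 2 in between, so the recurrent configurations of level [k]
   are the words over {0, 1, 2} of length [n] and sum [n - 1 + k] that neither
   begin nor end with 2 and have a 2 between any two zeros.  A four-state
   automaton recognises these words; counting its accepted words by length and
   sum gives, in the coordinates [(a, b) = (n - 1 - k, k)], the recurrences
   also satisfied by [\sum_r 'C(a, r) * 'C(r + b, r)]. *)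

Section Newman.
Variables (T : Type) (R : relation T) (weight : T -> nat).
Local Notation "a ->* b" := (clos_refl_trans T R a b) (at level 70).

Definition normal (a : T) := forall b, ~ R a b.

Hypothesis R_weight : forall a b, R a b -> weight b < weight a.
Hypothesis R_local_confluent : forall a b c, R a b -> R a c ->
  exists2 d, b ->* d & c ->* d.
Hypothesis normal_form_exists : forall a, exists2 b, a ->* b & normal b.

Lemma normal_form_unique a b c : a ->* b -> normal b -> a ->* c -> normal c -> b = c.
Proof.
have [m] := ubnP (weight a).
elim: m a b c => // m IH a b c ha
  /clos_rt_rt1n_iff [|a1 {}b ab1 b1b] nb /clos_rt_rt1n_iff [|a2 {}c ac2 c2c] nc //;
  try by [case: (nb _ ac2) | case: (nc _ ab1)].
have [d bd cd] := R_local_confluent ab1 ac2.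
have [e de ne] := normal_form_exists d.
have lt1 : weight a1 < m by have := R_weight ab1; lia.
have lt2 : weight a2 < m by have := R_weight ac2; lia.
have -> : b = e.
  by apply: (IH a1) => //; [exact/clos_rt_rt1n_iff | exact: rt_trans bd de].
by apply/esym; apply: (IH a2) => //; [exact/clos_rt_rt1n_iff | exact: rt_trans cd de].
Qed.

End Newman.

Notation "a ~>* b" := (clos_refl_trans _ (@topple_step _) a b) (at level 70).

Section Toppling.
Variable n : nat.
Implicit Types (a b c x : config n) (i j : 'I_n).

Definition topple c i : config n :=
  [ffun j => if j == i then c j - fan_deg i else c j + fan_adj i j].
Definition addcf c x : config n := [ffun j => c j + x j].
Definition csum c := \sum_(i < n) c i.

Lemma fan_adjnn i : fan_adj i i = false.
Proof. by apply/negbTE; rewrite negb_or; apply/andP; split; apply/eqP; lia. Qed.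

Lemma fan_adjC i j : fan_adj i j = fan_adj j i.
Proof. by rewrite /fan_adj orbC. Qed.

Lemma topple_stepE c c' :
  topple_step c c' <-> exists2 i, fan_deg i <= c i & c' = topple c i.
Proof. by split => [[i [h ->]]|[i h ->]]; exists i. Qed.

Lemma csum_topple c i : fan_deg i <= c i -> (csum (topple c i)).+1 = csum c.
Proof.
move=> hi; rewrite /csum (bigD1 i) //= [in RHS](bigD1 i) //= ffunE eqxx.
have -> : \sum_(j < n | j != i) topple c i j =
    \sum_(j < n | j != i) c j + \sum_(j < n | j != i) (fan_adj i j : nat).
  by rewrite -big_split; apply: eq_bigr => j /negbTE ji; rewrite ffunE ji.
have -> : \sum_(j < n | j != i) (fan_adj i j : nat) = #|[pred j | fan_adj i j]|.
  rewrite -sum1_card [RHS]big_mkcond [RHS](bigD1 i) //= inE fan_adjnn add0n.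
  by apply: eq_bigr => j _; rewrite inE; case: (fan_adj i j).
move: hi; rewrite /fan_deg; set s := (\sum_(j < n | j != i) c j); set t := #|_|; lia.
Qed.

Lemma stable_normal c : stable c -> normal (@topple_step n) c.
Proof. by move=> sc c' /topple_stepE [i hi _]; have := sc i; lia. Qed.

Lemma stabilization_exists a : exists2 b, a ~>* b & stable b.
Proof.
have [m] := ubnP (csum a); elim: m a => // m IH a ha.
case: (boolP [forall i, a i < fan_deg i]) => [/forallP sa|].
  by exists a; first exact: rt_refl.
move/forallPn => [i]; rewrite -leqNgt => hi; have hs := csum_topple hi.
have [b ab sb] := IH (topple a i) ltac:(lia).
by exists b => //; apply: rt_trans ab; apply: rt_step; exists i.
Qed.

Lemma topple_comm c i j : fan_deg i <= c i -> fan_deg j <= c j ->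
  topple (topple c i) j = topple (topple c j) i.
Proof.
move=> hi hj; case: (eqVneq i j) => [-> //|ij]; apply/ffunP => x; rewrite !ffunE.
have ji : (j == i) = false by rewrite eq_sym (negbTE ij).
case: (eqVneq x i) => [->|xi]; rewrite ?(negbTE ij) /=; first lia.
by case: (eqVneq x j) => [->|xj]; rewrite ?ji ?(negbTE xi) /=; lia.
Qed.

Lemma topple_local_confluent a b c : topple_step a b -> topple_step a c ->
  exists2 d, b ~>* d & c ~>* d.
Proof.
move=> /topple_stepE [i hi ->] /topple_stepE [j hj ->].
case: (eqVneq i j) => [-> | ij]; first by exists (topple a j); apply: rt_refl.
exists (topple (topple a i) j); apply: rt_step; last rewrite topple_comm //.
  by exists j; split; rewrite // ffunE eq_sym (negbTE ij); lia.
by exists i; split; rewrite // ffunE (negbTE ij); lia.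
Qed.

Lemma stabilization_unique a b b' :
  a ~>* b -> stable b -> a ~>* b' -> stable b' -> b = b'.
Proof.
move=> ab sb ab' sb'.
apply: (@normal_form_unique _ _ csum _ topple_local_confluent) ab _ ab' _;
  try exact: stable_normal.
- by move=> c c' /topple_stepE [i hi ->]; rewrite -(csum_topple hi).
- by move=> c; have [d cd sd] := stabilization_exists c; exists d => //; apply: stable_normal.
Qed.

Lemma stable_topples a b : stable a -> a ~>* b -> b = a.
Proof. by move=> sa /clos_rt_rt1n_iff [// | a1 y /(stable_normal sa)]. Qed.

Lemma topple_addcf c x i : fan_deg i <= c i ->
  topple (addcf c x) i = addcf (topple c i) x.
Proof. by move=> h; apply/ffunP => j; rewrite !ffunE; case: (eqVneq j i) => [->|_]; lia. Qed.

Lemma topples_addcf a b x : a ~>* b -> addcf a x ~>* addcf b x.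
Proof.
elim => [c c' /topple_stepE [i hi ->]|c|c1 c2 c3 _ h1 _ h2].
- apply/rt_step/topple_stepE; exists i; first by rewrite ffunE; lia.
  by rewrite topple_addcf.
- exact: rt_refl.
- exact: rt_trans h1 h2.
Qed.

End Toppling.

Section Recurrence.
Variable n : nat.
Implicit Types (a b c d x : config n) (i j : 'I_n).

Definition cmax : config n := [ffun i => (fan_deg i).-1].

Lemma stable_cmax : stable cmax.
Proof. by move=> i; rewrite ffunE /fan_deg. Qed.

Lemma asm_reach_stable a b : stable a -> asm_reach a b -> stable b.
Proof.
move=> + ab; elim: ab => [c c' [_ [i [_ sc']]] | // | c1 c2 c3 _ h1 _ h2 /h1 /h2] //.
Qed.

(* Adding the grains of [x] one at a time and stabilising after each one is a
   run of the chain, and by the abelian property it ends at the stabilisation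
   of [d + x]. *)
Lemma asm_reach_addcf d x b : stable d -> stabilizes (addcf d x) b -> asm_reach d b.
Proof.
have [m] := ubnP (csum x); elim: m x d b => // m IH x d b hx sd [db sb].
case: (boolP [forall j, x j == 0]) => [/forallP x0|].
  have dx : addcf d x = d by apply/ffunP => j; rewrite ffunE (eqP (x0 j)) addn0.
  by rewrite dx in db; rewrite (stable_topples sd db); apply: rt_refl.
move/forallPn => [i]; rewrite -lt0n => xi.
pose x' : config n := [ffun j => x j - (j == i)].
have hx' : (csum x').+1 = csum x.
  rewrite /csum (bigD1 i) //= [in RHS](bigD1 i) //= ffunE eqxx.
  rewrite (eq_bigr x) => [|j /negbTE ji]; last by rewrite ffunE ji subn0.
  by rewrite -addSn subn1 prednK.
have dxE : addcf d x = addcf (add_grain d i) x'.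
  by apply/ffunP => j; rewrite !ffunE; case: (eqVneq j i) => [->|_] /=; lia.
have [d1 d1E sd1] := stabilization_exists (add_grain d i).
have [e eE se] := stabilization_exists (addcf d1 x').
have be : b = e.
  apply: stabilization_unique db sb _ se.
  by rewrite dxE; apply: rt_trans (topples_addcf x' d1E) eE.
apply: (rt_trans _ _ _ d1); first by apply: rt_step; split => //; exists i.
by apply: (IH x') => //; [lia | rewrite be].
Qed.

Lemma asm_reach_cmax c : stable c -> asm_reach c cmax.
Proof.
move=> sc; apply: (asm_reach_addcf (x := [ffun j => cmax j - c j])) => //.
have -> : addcf c [ffun j => cmax j - c j] = cmax.
  by apply/ffunP => j; rewrite !ffunE; have := sc j; rewrite /fan_deg; lia.
by split; [exact: rt_refl | exact: stable_cmax].
Qed.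

Lemma recurrentE c : asm_recurrent c <-> stable c /\ asm_reach cmax c.
Proof.
split=> [[sc h] | [sc h]]; first by split=> //; apply/h/asm_reach_cmax.
split=> // c' cc'; apply: rt_trans (asm_reach_cmax _) h.
exact: asm_reach_stable cc'.
Qed.

End Recurrence.

Section ForbiddenSubconfigurations.
Variable n : nat.
Implicit Types (a b c d x : config n) (i j u v : 'I_n) (A T : {set 'I_n}).

Definition deg_in A v := #|[pred j | fan_adj v j && (j \in A)]|.

(* No nonempty [A] is a forbidden subconfiguration of [c], i.e. one in which
   every vertex holds fewer grains than it has neighbours in [A]. *)
Definition fsc_free c := forall A, A != set0 -> exists2 v, v \in A & deg_in A v <= c v.

Lemma deg_inD1 A v i : i \in A -> deg_in A v = deg_in (A :\ i) v + fan_adj v i.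
Proof.
move=> iA; rewrite /deg_in (cardD1 i) addnC inE iA andbT; congr (_ + _).
by apply: eq_card => j; rewrite !inE; case: (j == i); rewrite ?andbF.
Qed.

Lemma deg_in_set0 v : deg_in set0 v = 0.
Proof. by apply: eq_card0 => j; rewrite !inE andbF. Qed.

Lemma deg_in_setT v : (deg_in setT v).+1 = fan_deg v.
Proof. by rewrite /fan_deg /deg_in add1n; congr (_.+1); apply: eq_card => j; rewrite !inE andbT. Qed.

Lemma deg_in_setC A v : (deg_in A v + deg_in (~: A) v).+1 = fan_deg v.
Proof.
rewrite -deg_in_setT /deg_in -(cardID (mem A) [pred j | fan_adj v j && (j \in setT)]).
by congr ((_ + _).+1); apply: eq_card => j; rewrite !inE andbT // andbC.
Qed.

Lemma fsc_free_cmax : fsc_free (cmax n).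
Proof.
move=> A /set0Pn [v vA]; exists v => //; rewrite ffunE -deg_in_setT.
by apply: subset_leq_card; apply/subsetP => j; rewrite !inE => /andP [-> _].
Qed.

Lemma fsc_free_topple c i : fan_deg i <= c i -> fsc_free c -> fsc_free (topple c i).
Proof.
move=> hi hc A A0; case: (boolP (i \in A)) => iA; last first.
  have [v vA hv] := hc A A0; exists v => //; rewrite ffunE.
  by case: (eqVneq v i) => [vi|_]; [move: iA; rewrite -vi vA | lia].
case: (eqVneq (A :\ i) set0) => [Ai0|Ai0].
  exists i => //; rewrite (deg_inD1 i iA) Ai0 deg_in_set0 fan_adjnn.
  exact: leq0n.
have [v] := hc _ Ai0; rewrite !inE => /andP [vi vA] hv.
by exists v => //; rewrite ffunE (negbTE vi) (deg_inD1 v iA) fan_adjC; lia.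
Qed.

Lemma fsc_free_topples a b : a ~>* b -> fsc_free a -> fsc_free b.
Proof.
elim=> [c c' | // | c1 c2 c3 _ h1 _ h2 /h1 /h2 //].
by case/topple_stepE => i hi ->; apply: fsc_free_topple.
Qed.

Lemma fsc_free_reach a b : asm_reach a b -> fsc_free a -> fsc_free b.
Proof.
elim=> [c c' | // | c1 c2 c3 _ h1 _ h2 /h1 /h2 //].
move=> [_ [i [ct _]]] hc.
apply: fsc_free_topples ct _ => A /hc [v vA hv]; exists v => //.
by rewrite ffunE; lia.
Qed.

Lemma recurrent_fsc_free c : asm_recurrent c -> fsc_free c.
Proof. by case/recurrentE => _ /fsc_free_reach; apply; apply: fsc_free_cmax. Qed.

(* The configuration reached from [c + 1] (one grain per edge to the sink) after
   toppling every vertex of [T] once. *)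
Definition burning c T : config n :=
  [ffun v => c v + 1 + deg_in T v - (if v \in T then fan_deg v else 0)].

(* Dhar's burning algorithm: in an FSC-free configuration the unburnt vertices
   never form a forbidden subconfiguration, so some unburnt vertex can topple. *)
Lemma burning_topples c T : fsc_free c ->
  (forall u, u \in T -> fan_deg u <= c u + 1 + deg_in T u) -> burning c T ~>* c.
Proof.
move=> hc; have [m] := ubnP #|~: T|; elim: m T => // m IH T hm hT.
case: (eqVneq (~: T) set0) => [T0 | T0].
  have -> : burning c T = c.
    apply/ffunP => v; rewrite ffunE.
    have vT : v \in T by rewrite -[v \in T]negbK -in_setC T0 in_set0.
    by rewrite vT -(deg_in_setC T v) T0 deg_in_set0 addn0 -addnA add1n addnK.
  exact: rt_refl.
have [v] := hc _ T0; rewrite inE => vT hv.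
have degv := deg_in_setC T v.
have burnv : topple (burning c T) v = burning c (v |: T).
  apply/ffunP => u; rewrite !ffunE !inE.
  case: (eqVneq u v) => [-> | uv] /=.
    by rewrite (negbTE vT) (deg_inD1 v (setU11 v T)) setU1K // fan_adjnn; lia.
  rewrite fan_adjC (deg_inD1 u (setU11 v T)) setU1K //.
  by case: (boolP (u \in T)) => uT; [have := hT u uT |]; lia.
apply: (rt_trans _ _ _ (topple (burning c T) v)).
  by apply/rt_step/topple_stepE; exists v; rewrite // ffunE (negbTE vT); lia.
rewrite burnv; apply: IH => [|u].
  suff : #|~: (v |: T)| < #|~: T| by lia.
  apply: proper_card; rewrite setCU; apply/properP; split; first exact: subsetIr.
  by exists v; rewrite !inE ?vT ?eqxx.
rewrite !inE (deg_inD1 u (setU11 v T)) setU1K // => /orP [/eqP -> | uT].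
  by rewrite fan_adjnn; lia.
by have := hT u uT; lia.
Qed.

Lemma fsc_free_add_const c m : fsc_free c -> addcf c [ffun _ => m] ~>* c.
Proof.
move=> hc; elim: m => [|m IH].
  have -> : addcf c [ffun _ => 0] = c by apply/ffunP => v; rewrite !ffunE addn0.
  exact: rt_refl.
have burn1 : addcf c [ffun _ => 1] ~>* c.
  have -> : addcf c [ffun _ => 1] = burning c set0.
    by apply/ffunP => v; rewrite !ffunE inE deg_in_set0 !addn0 subn0.
  by apply: burning_topples => // u; rewrite inE.
have -> : addcf c [ffun _ => m.+1] = addcf (addcf c [ffun _ => 1]) [ffun _ => m].
  by apply/ffunP => v; rewrite !ffunE; lia.
exact: rt_trans (topples_addcf _ burn1) IH.
Qed.

(* [cmax] plus suitable grains is [c] plus [n] grains everywhere, and [n]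
   rounds of burning bring this back to [c]. *)
Lemma fsc_free_recurrent c : stable c -> fsc_free c -> asm_recurrent c.
Proof.
move=> sc hc; apply/recurrentE; split => //.
have cmax_le v : (fan_deg v).-1 <= n.
  by rewrite /fan_deg add1n /= -[n in _ <= n]card_ord max_card.
apply: (asm_reach_addcf (x := [ffun j => c j + n - cmax n j])); first exact: stable_cmax.
split => //; have -> : addcf (cmax n) [ffun j => c j + n - cmax n j] = addcf c [ffun _ => n].
  by apply/ffunP => j; rewrite !ffunE; have := cmax_le j; lia.
exact: fsc_free_add_const.
Qed.

End ForbiddenSubconfigurations.

Definition zeros_separated (s : seq nat) := forall i j, i < j < size s ->
  nth 0 s i = 0 -> nth 0 s j = 0 -> exists2 k, i < k < j & nth 0 s k = 2.

Section Fan.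
Variable N : nat.
Local Notation n := N.+1.
Implicit Types (c : config n) (u v : 'I_n) (A : {set 'I_n}).

Lemma card_val_eq (a : nat) (P : pred 'I_n) :
  #|[pred u : 'I_n | (val u == a) && P u]| = (a < n) && P (inord a).
Proof.
case: (ltnP a n) => [an | na] /=; last first.
  rewrite eq_card0 // => u; rewrite !inE; case: eqP => // ua; have := ltn_ord u; lia.
rewrite (eq_card (B := [pred u | (u == inord a) && P (inord a)])).
  case: (P _); last by rewrite eq_card0 // => u; rewrite !inE andbF.
  by apply: (eq_card_trans (card1 (inord a))) => u; rewrite !inE ?andbT.
by move=> u; rewrite !inE -val_eqE /= inordK //; case: eqP => // <-; rewrite inord_val.
Qed.

Lemma deg_inE A v : deg_in A v =
  ((0 < v) && (inord v.-1 \in A)) + ((v.+1 < n) && (inord v.+1 \in A)).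
Proof.
have vn := ltn_ord v.
pose prev := [pred u : 'I_n | (val u == v.-1) && ((0 < v) && (u \in A))].
pose next := [pred u : 'I_n | (val u == v.+1) && (u \in A)].
have disj : #|[predI prev & next]| = 0.
  apply: eq_card0 => u; rewrite !inE; apply/negP => /andP [/andP [/eqP -> _] /andP [/eqP]].
  lia.
rewrite /deg_in (eq_card (B := [predU prev & next])) => [|u]; last first.
  rewrite !inE /fan_adj orbC; case: (posnP v) => v0; rewrite ?v0 ?andbF /=;
    by do 2 case: eqP => //=; lia.
by rewrite -[LHS]addn0 -disj cardUI !card_val_eq (_ : v.-1 < n) //; lia.
Qed.

Lemma fan_degE v : fan_deg v = 1 + (0 < v) + (v.+1 < n).
Proof. by rewrite -deg_in_setT deg_inE !in_setT !andbT. Qed.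

Lemma stable_le2 c v : stable c -> c v <= 2.
Proof. by move/(_ v); rewrite fan_degE; case: (0 < v); case: (v.+1 < n) => /=; lia. Qed.

Lemma deg_in_run A (p q : nat) v : p <= v <= q -> q < n ->
  (forall u : 'I_n, p <= u <= q -> u \in A) ->
  (0 < p -> inord p.-1 \notin A) -> (q.+1 < n -> inord q.+1 \notin A) ->
  deg_in A v = (p < v) + (v < q).
Proof.
move=> /andP [pv vq] qn run lo hi; have vn := ltn_ord v; rewrite deg_inE.
congr (_ + _).
  case: (ltnP p v) => [pv' | vp].
    by rewrite (leq_ltn_trans _ pv') // run // inordK; lia.
  have -> : nat_of_ord v = p by lia.
  by case: (posnP p) => [-> // | p0]; rewrite (negbTE (lo p0)) andbF.
case: (ltnP v q) => [vq' | qv].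
  by rewrite (leq_ltn_trans vq' qn) run // inordK; lia.
have -> : nat_of_ord v = q by lia.
by case: (ltnP q.+1 n) => [q1n | //]; rewrite (negbTE (hi q1n)) andbF.
Qed.

Definition word c : seq nat := mkseq (fun m => c (inord m)) n.

Lemma size_word c : size (word c) = n.
Proof. exact: size_mkseq. Qed.

Lemma nth_word c (m : nat) : m < n -> nth 0 (word c) m = c (inord m).
Proof. exact: nth_mkseq. Qed.

Lemma fsc_free_separated c : stable c -> fsc_free c -> zeros_separated (word c).
Proof.
move=> sc hc i j; rewrite size_word => /andP [ij jn].
rewrite !nth_word //; last by lia.
move=> ci cj; case: (boolP [exists k : 'I_n, (i < k < j) && (c k == 2)]).
  by case/existsP => k /andP [ikj /eqP ck]; exists k; rewrite // nth_word // inord_val.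
move/existsPn => no2; exfalso.
have [|v] := hc [set u : 'I_n | i <= u <= j].
  by apply/set0Pn; exists (inord i); rewrite inE inordK //; lia.
rewrite inE => ivj; rewrite (deg_in_run (p := i) (q := j)) //; last 3 first.
- by move=> u; rewrite inE.
- by move=> i0; rewrite inE inordK; lia.
- by move=> jn'; rewrite inE inordK; lia.
have := no2 v; have := stable_le2 v sc.
case: (eqVneq (v : nat) i) => [vi | vi]; first by rewrite -vi inord_val in ci; lia.
case: (eqVneq (v : nat) j) => [vj | vj]; first by rewrite -vj inord_val in cj; lia.
have [iv vj'] : i < v /\ v < j by lia.
by rewrite iv vj' /= => ? /eqP; lia.
Qed.

Lemma maximal_run A (p : 'I_n) : p \in A -> exists2 q : 'I_n, p <= q &
  (forall u : 'I_n, p <= u <= q -> u \in A) /\ (q.+1 < n -> inord q.+1 \notin A).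
Proof.
move=> pA; pose run := [pred u : 'I_n | [forall w : 'I_n, (p <= w <= u) ==> (w \in A)]].
have prun : run p.
  by apply/forallP => w; apply/implyP => pw; rewrite (_ : w = p) //; apply: val_inj => /=; lia.
have [q /forallP qrun qmax] := arg_maxnP (@nat_of_ord n) prun.
have inrun u : p <= u <= q -> u \in A by move=> puq; have /implyP := qrun u; apply.
exists q; first exact: qmax; split=> // qn; apply/negP => qA.
suff : (inord q.+1 : 'I_n) <= q by rewrite inordK // ltnn.
apply: qmax; apply/forallP => w; apply/implyP => /andP [pw]; rewrite inordK // leq_eqVlt ltnS.
case/orP => [/eqP wq | wq]; last by apply: inrun; lia.
by rewrite -(_ : inord q.+1 = w) //; apply: val_inj; rewrite /= inordK.
Qed.

(* A forbidden subconfiguration contains a maximal run [p, q] of consecutive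
   vertices; inside it the vertex degrees are those of a path, which forces
   zeros at [p] and [q] and no 2 in between. *)
Lemma separated_fsc_free c : zeros_separated (word c) -> fsc_free c.
Proof.
move=> sep A A0.
case: (boolP [exists v in A, deg_in A v <= c v]) => [/exists_inP [v] | ]; first by exists v.
rewrite negb_exists_in => /forall_inP fsc; exfalso.
have lt v : v \in A -> c v < deg_in A v by move/fsc; rewrite ltnNge.
have /set0Pn [v0 v0A] := A0.
have [p pA pmin] := arg_minnP (@nat_of_ord n) v0A.
have [q pq [inrun hi]] := maximal_run pA.
have lo : 0 < p -> inord p.-1 \notin A.
  by move=> p0; apply/negP => /pmin; rewrite inordK; have := ltn_ord p; lia.
have degE u : p <= u <= q -> deg_in A u = (p < u) + (u < q).
  by move=> puq; apply: deg_in_run.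
have cp : c p < (p < q) by have := lt p pA; rewrite degE ?leqnn ?pq // ltnn.
have qA : q \in A by apply: inrun; rewrite leqnn pq.
have cq : c q < (p < q) by have := lt q qA; rewrite degE ?pq ?leqnn // ltnn /= addn0.
have pq' : p < q by move: cp; case: (p < q).
rewrite pq' /= in cp cq.
have [k /andP [pk kq] ck] : exists2 k, p < k < q & nth 0 (word c) k = 2.
  by apply: sep; rewrite ?size_word ?nth_word ?inord_val //=; have := ltn_ord q; lia.
have kn : k < n by have := ltn_ord q; lia.
rewrite nth_word // in ck.
have kA : inord k \in A by apply: inrun; rewrite inordK; lia.
by have := lt _ kA; rewrite degE inordK ?ck; lia.
Qed.

End Fan.

Definition zeros_guarded (s : seq nat) := forall j, j < size s ->
  nth 0 s j = 0 -> exists2 k, k < j & nth 0 s k = 2.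

Lemma zeros_separated_cons x t :
  zeros_separated (x :: t) <-> zeros_separated t /\ (x = 0 -> zeros_guarded t).
Proof.
split=> [sep | [sep guard]].
  split=> [i j ij zi zj | x0 j jt zj].
    by have [[|k] ? ?] := sep i.+1 j.+1 ij zi zj; [lia | exists k].
  by have [[|k] ? ?] := sep 0 j.+1 jt x0 zj; [lia | exists k].
move=> [|i] [|j] //= ij zi zj.
  by have [k ? ?] := guard zi j ij zj; exists k.+1.
by have [k ? ?] := sep i j ij zi zj; exists k.+1.
Qed.

Lemma zeros_guarded_cons x t :
  zeros_guarded (x :: t) <-> x <> 0 /\ (x = 2 \/ zeros_guarded t).
Proof.
split=> [guard | [x0 guard] [|j] //= jt zj].
  have x0 : x <> 0 by move=> zx; have [] := guard 0 isT zx.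
  split=> //; case: (eqVneq x 2) => [-> | x2]; [by left | right].
  move=> j jt zj; have [[|k] ? xk] := guard j.+1 jt zj; last by exists k.
  by move: x2; rewrite -xk eqxx.
case: guard => [-> | guard]; first by exists 0.
by have [k ? ?] := guard j jt zj; exists k.+1.
Qed.

(* Reading a word over {0, 1, 2} from the left: [Blocked] means a 0 has been
   read since the last 2, [Two] means the last letter read is a 2. *)
Inductive scan := Start | Blocked | Free | Two.

Definition step (st : scan) (x : nat) : option scan :=
  match x, st with
  | 0, Blocked => None
  | 0, _ => Some Blocked
  | 1, Blocked => Some Blocked
  | 1, _ => Some Free
  | 2, Start => None
  | 2, _ => Some Two
  | _, _ => None
  end.

Fixpoint accepts (st : scan) (s : seq nat) : bool :=
  if s is x :: t then (if step st x is Some st' then accepts st' t else false)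
  else if st is Two then false else true.

Lemma accepts_Two s : accepts Two s = (s != [::]) && accepts Free s.
Proof. by case: s => [|[|[|[|x]]] t]. Qed.

Lemma accepts_Start s : accepts Start s = (head 0 s != 2) && accepts Free s.
Proof. by case: s => [|[|[|[|x]]] t]. Qed.

Lemma accepts_spec s : all (fun x => x < 3) s ->
  (accepts Free s <-> zeros_separated s /\ last 0 s != 2) /\
  (accepts Blocked s <-> zeros_guarded s /\ zeros_separated s /\ last 0 s != 2).
Proof.
elim: s => [_ | x t IH /andP [x3 /IH [[F1 F2] [B1 B2]]] {IH}].
  have sep : zeros_separated [::] by move=> i j /=; lia.
  have guard : zeros_guarded [::] by move=> j /=; lia.
  by do 2 split=> //.
have lastE : x != 2 -> (last x t != 2) = (last 0 t != 2) by case: t {F1 F2 B1 B2}.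
rewrite zeros_separated_cons zeros_guarded_cons.
case: x x3 lastE => [|[|[|x]]] //= _ lastE.
- by intuition.
- by rewrite lastE //; intuition.
have TwoE : accepts Two t <-> zeros_separated t /\ last 2 t != 2.
  by rewrite accepts_Two; case: t {lastE B1 B2} F1 F2 => [|y t] //= F1 F2; intuition.
by rewrite TwoE; intuition.
Qed.

Fixpoint words (m : nat) : seq (seq nat) :=
  if m is m'.+1 then
    [seq 0 :: w | w <- words m'] ++ [seq 1 :: w | w <- words m'] ++ [seq 2 :: w | w <- words m']
  else [:: [::]].

Lemma mem_cons_map (y x : nat) t (W : seq (seq nat)) :
  (x :: t \in [seq y :: w | w <- W]) = (x == y) && (t \in W).
Proof.
apply/mapP/andP => [[w wW [-> ->]] | [/eqP -> tW]]; first by split.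
by exists t.
Qed.

Lemma mem_words m s : (s \in words m) = (size s == m) && all (fun x => x < 3) s.
Proof.
elim: m s => [|m IH] [|x t] //=.
  by rewrite !mem_cat; apply/negP; case/or3P => /mapP [].
by rewrite !mem_cat !mem_cons_map IH eqSS; case: x => [|[|[|x]]]; rewrite //= ?orbF ?andbF.
Qed.

Lemma uniq_words m : uniq (words m).
Proof.
elim: m => [//|m IH] /=.
have cons_inj (y : nat) : injective (cons y) by move=> ? ? [].
rewrite !cat_uniq !map_inj_uniq // IH /= andbT has_cat negb_or.
rewrite -!all_predC; do ![apply/andP; split]; apply/allP => _ /mapP [w _ ->].
all: by rewrite /= mem_cons_map.
Qed.

Fixpoint nwords (m : nat) (st : scan) (s : nat) : nat :=
  if m is m'.+1 then
      (if step st 0 is Some st' then nwords m' st' s else 0)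
    + (if step st 1 is Some st' then if s is s'.+1 then nwords m' st' s' else 0 else 0)
    + (if step st 2 is Some st' then if s is s'.+2 then nwords m' st' s' else 0 else 0)
  else accepts st [::] && (s == 0).

Arguments nwords : simpl never.

Lemma nwords0 st s : nwords 0 st s = accepts st [::] && (s == 0).
Proof. by []. Qed.

Lemma nwordsS m st s : nwords m.+1 st s =
    (if step st 0 is Some st' then nwords m st' s else 0)
  + (if step st 1 is Some st' then if s is s'.+1 then nwords m st' s' else 0 else 0)
  + (if step st 2 is Some st' then if s is s'.+2 then nwords m st' s' else 0 else 0).
Proof. by []. Qed.

Lemma count_words m st s :
  count (fun w => accepts st w && (sumn w == s)) (words m) = nwords m st s.
Proof.
elim: m st s => [|m IH] st s /=; first by rewrite nwords0 addn0 eq_sym.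
rewrite nwordsS !count_cat !count_map addnA.
congr (_ + _ + _); [| case: s => [|s] | case: s => [|[|s]]]; case: st;
  rewrite -?[RHS]IH -?[RHS](count_pred0 (words m)); apply: eq_count => w /=;
  by rewrite ?andbF ?add0n ?add1n ?addSn ?eqSS.
Qed.

Definition binsum (m k : nat) := \sum_(r < m.+1) 'C(m, r) * 'C(r + k, r).
Definition binsum_shift (m k : nat) := \sum_(r < m.+1) 'C(m, r) * 'C(r + k.+1, r.+1).

Lemma binsum0 k : binsum 0 k = 1.
Proof. by rewrite /binsum big_ord1 !bin0. Qed.

Lemma binsum_shift0 k : binsum_shift 0 k = k.+1.
Proof. by rewrite /binsum_shift big_ord1 bin0 bin1 mul1n. Qed.

Lemma binsum_shift_0 m : binsum_shift m 0 = binsum m 0.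
Proof. by apply: eq_bigr => r _; rewrite addn0 addn1 !binn. Qed.

Lemma binsumS m k : binsum m.+1 k = binsum m k + binsum_shift m k.
Proof.
rewrite /binsum /binsum_shift big_ord_recl [in RHS]big_ord_recl /= !bin0 !mul1n -addnA.
congr (_ + _); rewrite (eq_bigr (fun i : 'I_m.+1 => 'C(m, i.+1) * 'C(i.+1 + k, i.+1)
    + 'C(m, i) * 'C(i + k.+1, i.+1))) => [|i _]; last first.
  by rewrite /bump /= add1n binS mulnDl addSnnS.
rewrite big_split /=; congr (_ + _).
by rewrite big_ord_recr /= bin_small // mul0n addn0; apply: eq_bigr => i _; rewrite /bump /= add1n.
Qed.

Lemma binsum_shiftS m k : binsum_shift m k.+1 = binsum_shift m k + binsum m k.+1.
Proof.
by rewrite /binsum /binsum_shift -big_split; apply: eq_bigr => r _; rewrite addnS binS mulnDr.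
Qed.

Lemma nwords_Two m s : nwords m.+1 Two s = nwords m.+1 Free s.
Proof. by rewrite !nwordsS. Qed.

(* From either state, [2 ... 2 1] is the only accepted word of length [m.+1]
   with sum at least [2m + 1]. *)
Lemma nwords_top m s : m.*2.+1 <= s ->
  nwords m.+1 Blocked s = (s == m.*2.+1) /\ nwords m.+1 Free s = (s == m.*2.+1).
Proof.
elim: m s => [|m IH] [|[|s]] // hs; rewrite !nwordsS /=.
rewrite doubleS !ltnS in hs.
have [B2 F2] := IH s.+2 ltac:(lia); have [B1 F1] := IH s.+1 ltac:(lia).
have [B0 F0] := IH s hs.
rewrite nwords_Two B2 B1 F1 F0.
have -> : (s.+2 == m.*2.+1) = false by apply/eqP; lia.
have -> : (s.+1 == m.*2.+1) = false by apply/eqP; lia.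
by rewrite doubleS !eqSS.
Qed.

Lemma nwords_low m s :
  (s < m -> nwords m Blocked s = 0) /\ (s.+1 < m -> nwords m Free s = 0).
Proof.
elim: m s => [|m IH] s //; rewrite !nwordsS /=.
have Two0 s' : s'.+1 < m -> nwords m Two s' = 0.
  by case: m IH => [//|m] IH; rewrite nwords_Two; apply: (IH s').2.
split=> hs.
  by case: s hs => [|[|s]] // hs; rewrite ?(IH _).1 ?Two0 //; lia.
by case: s hs => [|[|s]] // hs; rewrite ?(IH _).1 ?(IH _).2 ?Two0 //; lia.
Qed.

Lemma nwords_binsum a b :
  nwords (a + b).+1 Blocked (a + b.*2).+1 = binsum a b /\
  nwords (a + b).+1 Free (a + b.*2) = binsum_shift a b.
Proof.
elim: a b => [|a IHa] b; rewrite ?add0n.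
  split; first by rewrite (nwords_top (leqnn _)).1 eqxx binsum0.
  elim: b => [|b IHb]; first by rewrite binsum_shift0.
  rewrite !binsum_shift0 in IHb *.
  rewrite nwordsS doubleS /= nwords_Two IHb (nwords_top _).1 ?(nwords_top _).2 //.
  by rewrite eqxx gtn_eqF.
have [Bab Fab] := IHa b.
split; first by rewrite binsumS !addSn nwordsS /= nwords_Two Bab Fab.
elim: b {Bab Fab} => [|b IHb].
  rewrite !addn0 in IHa *; have [Ba0 Fa0] := IHa 0; rewrite !addn0 in Ba0 Fa0.
  rewrite [RHS]binsum_shift_0 binsumS nwordsS /= Ba0 Fa0.
  case: a {IHa Ba0 Fa0} => [|a]; first by rewrite addn0.
  by rewrite nwords_Two (nwords_low _ _).2 ?addn0.
have [Bab1 Fab1] := IHa b.+1; rewrite doubleS !addnS in Bab1 Fab1.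
rewrite doubleS !addSn !addnS nwordsS /= Bab1 Fab1 nwords_Two.
by rewrite !addSn in IHb; rewrite IHb [RHS]binsum_shiftS binsumS; lia.
Qed.

Lemma nwords_Start N k : 0 < N -> k <= N -> nwords N.+1 Start (N + k) = binsum (N - k) k.
Proof.
move=> N0; rewrite leq_eqVlt => /orP [/eqP -> | kN]; rewrite nwordsS /=.
  case: N N0 => // m _; rewrite subnn binsum0 addSn /=.
  rewrite (nwords_top _).1 ?(nwords_top _).2 -?addnn ?addnS ?eqxx ?gtn_eqF //; lia.
have [a ->] : exists a, N = (a + k).+1 by exists (N.-1 - k); lia.
have -> : (a + k).+1 + k = (a + k.*2).+1 by rewrite -addnn; lia.
have [-> ->] := nwords_binsum a k.
by rewrite -binsumS addn0; congr binsum; lia.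
Qed.

Section FanWords.
Variable N : nat.
Local Notation n := N.+1.
Implicit Types (c : config n) (d : {ffun 'I_n -> 'I_3}).

Lemma all_word_lt3 c : (forall v, c v < 3) -> all (fun x => x < 3) (word c).
Proof. by move=> c3; apply/allP => _ /mapP [i _ ->]. Qed.

Lemma sumn_word c : sumn (word c) = \sum_(i < n) c i.
Proof.
rewrite sumnE /word /mkseq big_map -[iota 0 n]/(index_iota 0 n) big_mkord.
by apply: eq_bigr => i _; rewrite inord_val.
Qed.

Lemma card_words (Q : pred (seq nat)) :
  #|[set d : {ffun 'I_n -> 'I_3} | Q (word (to_config d))]| = count Q (words n).
Proof.
have := uniq_words n; have := mem_words n; move: (words n) => W memW uniqW.
rewrite cardsE cardE /enum_mem size_filter -enumT /=.
rewrite (eq_count (a2 := preim (fun d => word (to_config d)) Q)) => [|d]; last by rewrite !inE.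
rewrite -count_map; apply/permP/uniq_perm => //.
  rewrite map_inj_uniq ?enum_uniq // => d1 d2 eq12; apply/ffunP => i; apply/val_inj.
  by have := congr1 (nth 0 ^~ i) eq12; rewrite /= !nth_word // !ffunE inord_val.
move=> s; rewrite memW; apply/mapP/andP => [[d _ ->] | [/eqP sn s3]].
  by split; [rewrite size_mkseq | apply: all_word_lt3 => v; rewrite ffunE].
exists [ffun i : 'I_n => (inord (nth 0 s i) : 'I_3)]; first by rewrite mem_enum.
apply: (@eq_from_nth _ 0) => [|i]; rewrite ?size_word sn // => ilt.
rewrite nth_word // !ffunE /= !inordK //.
by apply: (allP s3); rewrite mem_nth ?sn.
Qed.

Lemma recurrent_separated c : asm_recurrent c <-> stable c /\ zeros_separated (word c).
Proof.
split=> [rc | [sc sep]]; last exact/fsc_free_recurrent/separated_fsc_free.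
by have sc := rc.1; split=> //; apply: fsc_free_separated => //; apply: recurrent_fsc_free.
Qed.

Lemma stable_word c : 0 < N -> (forall v, c v < 3) ->
  stable c <-> head 0 (word c) != 2 /\ last 0 (word c) != 2.
Proof.
move=> N0 c3; rewrite -nth0 -nth_last size_word !nth_word //=.
split=> [sc | [c0 cN] v].
  by have := sc (inord 0); have := sc (inord N); rewrite !fan_degE !inordK //=; lia.
rewrite fan_degE; have vn := ltn_ord v; have := c3 v.
case: (posnP v) => [v0 | v0].
  have -> : v = inord 0 by apply: val_inj; rewrite /= inordK.
  by rewrite inordK // [1 < n]ltnS N0 /=; lia.
case: (ltnP v.+1 n) => [vN | vN] /=; first by lia.
have -> : v = inord N by apply: val_inj; rewrite /= inordK //; lia.
lia.
Qed.

Lemma recurrent_level_accepts c k : 0 < N -> (forall v, c v < 3) ->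
  (asm_recurrent c /\ level c = k%:Z)%R <->
  accepts Start (word c) && (sumn (word c) == N + k).
Proof.
move=> N0 c3; have [[F1 F2] _] := accepts_spec (all_word_lt3 c3).
rewrite recurrent_separated stable_word // accepts_Start sumn_word.
have -> : (level c = k%:Z)%R <-> \sum_(i < n) c i = N + k.
  by rewrite /level /=; split=> h; lia.
split=> [[[[c0 cN] sep] lv] | /andP [/andP [c0 /F1 [sep cN]] /eqP lv]].
  by rewrite c0 F2 // lv eqxx.
by do !split.
Qed.

End FanWords.

Lemma to_config_inj n : injective (@to_config n).
Proof.
move=> d1 d2 /ffunP eq12; apply/ffunP => i; apply/val_inj.
by have := eq12 i; rewrite !ffunE.
Qed.

Theorem mainTheorem17 (n k : nat) (hn : 2 <= n) (hk : k < n)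
  (S : {set {ffun 'I_n -> 'I_3}}) :
  (forall c : config n,
     (asm_recurrent c /\ level c = (k%:Z)%R) <->
     (exists2 d, d \in S & c = to_config d)) ->
  #|S| = \sum_(r < n - k) 'C(n - k - 1, r) * 'C(r + k, r).
Proof.
case: n hn hk S => [//|N] hn hk S hS; have N0 : 0 < N by lia.
pose accepted (w : seq nat) := accepts Start w && (sumn w == N + k).
have c3 (d : {ffun 'I_N.+1 -> 'I_3}) v : to_config d v < 3 by rewrite ffunE.
have -> : #|S| = #|[set d : {ffun 'I_N.+1 -> 'I_3} | accepted (word (to_config d))]|.
  apply: eq_card => d; rewrite inE /accepted; apply/idP/idP => [dS | acc].
    by apply/(recurrent_level_accepts k N0 (c3 d))/hS; exists d.
  by have [d' d'S /to_config_inj ->] := (hS _).1 ((recurrent_level_accepts k N0 (c3 d)).2 acc).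
rewrite card_words /accepted count_words nwords_Start //.
by rewrite subSn // subn1.
Qed.
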